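(* When Algorithm A (described below) is applied to a sequence $\epsilon$, producing $\epsilon'$, there is no position $i$ that is a transient occurrence of $q$.
   Context: The reduction of an integer word replaces each occurrence of its $k$-th smallest distinct value by $k-1$; a consecutive pattern $\underline{p_1p_2p_3p_4}$ occurs in a sequence at position $i$ if the reduction of its entries in positions $i,\dots,i+3$ equals $p_1p_2p_3p_4$. Let $p=\underline{0102}$ and $q=\underline{0112}$. Algorithm A, on input an integer sequence $\mathrm{seq}=\epsilon_1\cdots\epsilon_n$: let $E_p$, $E_q$ be the sets of positions of occurrences of $p$, resp. $q$, in the input sequence; set $\mathrm{last}:=$ null. For $i=1,2,\dots,n$ in order: let $N_p,N_q$ be the sets of positions of occurrences of $p$, resp. $q$, in the current sequence. If $i-2\in E_p$: set $\mathrm{last}:=\mathrm{seq}[i]$ and $\mathrm{seq}[i]:=\mathrm{seq}[i-1]$. Else if $i-2\in E_q$: set $\mathrm{last}:=\mathrm{seq}[i]$ and $\mathrm{seq}[i]:=\mathrm{seq}[i-2]$. Else if $i-2\in N_p$ or $i-2\in N_q$: swap the values of $\mathrm{seq}[i]$ and $\mathrm{last}$. Output $\mathrm{seq}$. With $\epsilon$ the input and $\epsilon'$ the output: position $i$ is an original occurrence of $q$ if $\epsilon_i<\epsilon_{i+1}=\epsilon_{i+2}<\epsilon_{i+3}$; it is a transient occurrence of $q$ if it is not an original occurrence of $q$ but $\epsilon'_i<\epsilon_{i+1}=\epsilon_{i+2}<\epsilon_{i+3}$. *)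

From mathcomp Require Import all_boot all_order all_algebra.
Set Implicit Arguments. Unset Strict Implicit. Unset Printing Implicit Defensive.
Import Order.TTheory GRing.Theory Num.Theory.
Local Open Scope ring_scope.

(* Sequences are words over int; positions are 1-based as in the paper. *)

Definition ent (s : seq int) (i : nat) : int := nth 0 s i.-1.

Definition reduction (w : seq int) : seq nat :=
  let vals := sort <=%R (undup w) in [seq index x vals | x <- w].

Definition occurs (pat : seq nat) (s : seq int) (i : nat) : bool :=
  [&& (1 <= i)%N, (i + 3 <= size s)%N &
      reduction (take 4 (drop i.-1 s)) == pat].

Definition pat_p : seq nat := [:: 0; 1; 0; 2]%N.
Definition pat_q : seq nat := [:: 0; 1; 1; 2]%N.

Definition upd (s : seq int) (i : nat) (v : int) : seq int := set_nth 0 s i.-1 v.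

(* One iteration (index i) of Algorithm A; state = (current sequence, last).
   [last] = None represents "null".  The tested position is i-2 (truncated
   subtraction: for i <= 2 this gives 0, which is never an occurrence). *)
Definition algA_step (eps : seq int) (st : seq int * option int) (i : nat)
  : seq int * option int :=
  let: (cur, last) := st in
  if occurs pat_p eps (i - 2) then (upd cur i (ent cur i.-1), Some (ent cur i))
  else if occurs pat_q eps (i - 2) then (upd cur i (ent cur (i - 2)), Some (ent cur i))
  else if occurs pat_p cur (i - 2) || occurs pat_q cur (i - 2) then
    match last with
    | Some v => (upd cur i v, Some (ent cur i))
    | None => (cur, None) (* unreachable *)
    end
  else (cur, last).

Definition algorithmA (eps : seq int) : seq int :=
  (foldl (algA_step eps) (eps, None) (iota 1 (size eps))).1.

Definition original_q (eps : seq int) (i : nat) : Prop :=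
  [/\ (1 <= i)%N, (i + 3 <= size eps)%N &
   ent eps i < ent eps i.+1 /\ ent eps i.+1 = ent eps i.+2 /\ ent eps i.+2 < ent eps i.+3].

Definition transient_q (eps : seq int) (i : nat) : Prop :=
  let eps' := algorithmA eps in
  [/\ (1 <= i)%N, (i + 3 <= size eps)%N, ~ original_q eps i &
   ent eps' i < ent eps i.+1 /\ ent eps i.+1 = ent eps i.+2 /\ ent eps i.+2 < ent eps i.+3].

From mathcomp Require Import all_boot all_order all_algebra.
From mathcomp Require Import zify.
Import Order.TTheory GRing.Theory Num.Theory.

Set Implicit Arguments.
Unset Strict Implicit.

(* Algorithm A writes position i only at step i, and at that moment positions
   i and i+1 still hold their input values.  The value there changes only if
   an occurrence of p or q (in the input or in the current sequence) starts at
   i-2; both patterns rise from their third to their fourth entry, so then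
   eps_i < eps_(i+1).  Hence either eps'_i = eps_i or eps_i < eps_(i+1), and in
   both cases a would-be transient occurrence of q at i is already original. *)

Lemma reduction_lt (w : seq int) a b : a < size w -> b < size w ->
  nth 0 (reduction w) a < nth 0 (reduction w) b -> (nth 0 w a < nth 0 w b)%R.
Proof.
move=> ha hb; rewrite /reduction /= !(nth_map (0 : int)) //.
set vals := sort _ _ => lt_ab.
have vals_lt : sorted <%R vals by rewrite sort_lt_sorted undup_uniq.
have in_vals k : k < size w -> nth 0%R w k \in vals.
  by move=> hk; rewrite mem_sort mem_undup mem_nth.
exact: (sorted_ltn_index lt_trans vals_lt _ _ (in_vals a ha) (in_vals b hb)).
Qed.

Lemma occurs_lt (pat : seq nat) s j a b : occurs pat s j ->
  a < 4 -> b < 4 -> nth 0 pat a < nth 0 pat b ->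
  (ent s (j + a) < ent s (j + b))%R.
Proof.
case/and3P=> j_gt0 js /eqP red_w ha hb lt_ab.
set w := take 4 (drop j.-1 s) in red_w.
have size_w : size w = 4 by rewrite size_take size_drop; case: ifP; lia.
have nth_w k : k < 4 -> nth 0%R w k = ent s (j + k).
  by move=> hk; rewrite nth_take // nth_drop /ent; congr nth; lia.
by rewrite -!nth_w //; apply: reduction_lt; rewrite ?size_w ?red_w.
Qed.

Lemma occurs_pq_lt s i : occurs pat_p s (i - 2) || occurs pat_q s (i - 2) ->
  (ent s i < ent s i.+1)%R.
Proof.
move=> occ; have i_gt2 : 2 < i by case/orP: occ => /and3P [] /=; lia.
have -> : i = i - 2 + 2 by lia.
have -> : (i - 2 + 2).+1 = i - 2 + 3 by lia.
by case/orP: occ => occ; exact: (occurs_lt (a := 2) (b := 3) occ).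
Qed.

Lemma ent_upd c k v j : k.-1 != j.-1 -> ent (upd c k v) j = ent c j.
Proof. by rewrite /ent /upd nth_set_nth /= eq_sym => /negPf ->. Qed.

Lemma ent_algA_step_other eps st k j : k.-1 != j.-1 ->
  ent (algA_step eps st k).1 j = ent st.1 j.
Proof.
case: st => c [v|] kj /=; do 3?case: ifP => _ //=; exact: ent_upd.
Qed.

Lemma ent_foldl_algA_step eps st l j : {in l, forall k, k.-1 != j.-1} ->
  ent (foldl (algA_step eps) st l).1 j = ent st.1 j.
Proof.
elim: l st => [|k l IH] st //= l_j.
rewrite IH => [|k' lk']; last by apply: l_j; rewrite inE lk' orbT.
by apply: ent_algA_step_other; apply: l_j; rewrite mem_head.
Qed.

Lemma ent_algA_step_self eps c la i :
  ent c i = ent eps i -> ent c i.+1 = ent eps i.+1 ->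
  ent (algA_step eps (c, la) i).1 i = ent eps i \/ (ent eps i < ent eps i.+1)%R.
Proof.
move=> ci ci1; rewrite /algA_step.
case: ifP => occ_p; first by right; apply: occurs_pq_lt; rewrite occ_p.
case: ifP => occ_q; first by right; apply: occurs_pq_lt; rewrite occ_q orbT.
case: ifP => [occ_c | _]; last by left.
by right; rewrite -ci -ci1; apply: occurs_pq_lt.
Qed.

Lemma ent_algorithmA eps i : 0 < i <= size eps ->
  ent (algorithmA eps) i = ent eps i \/ (ent eps i < ent eps i.+1)%R.
Proof.
move=> /andP [i_gt0 i_le]; rewrite /algorithmA.
have -> : iota 1 (size eps) = iota 1 i.-1 ++ i :: iota i.+1 (size eps - i).
  have -> : size eps = i.-1 + (1 + (size eps - i)) by lia.
  by rewrite !iotaD /=; congr (_ ++ _ :: iota _ _); lia.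
rewrite foldl_cat /= ent_foldl_algA_step => [|k]; last first.
  by rewrite mem_iota => /andP [] /=; lia.
case def_st: (foldl _ _ _) => [c la]; apply: ent_algA_step_self.
all: rewrite -[c]/((c, la).1) -def_st ent_foldl_algA_step // => k.
all: by rewrite mem_iota => /andP [] /=; lia.
Qed.

Theorem corollary1 (eps : seq int) (i : nat) : ~ transient_q eps i.
Proof.
case=> i_gt0 i_le not_orig [lt_i [eq_i1 lt_i2]]; apply: not_orig.
have range_i : 0 < i <= size eps by lia.
have [out_i | rise_i] := ent_algorithmA range_i.
- by split=> //; rewrite -out_i.
- by split.
Qed.
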